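(* Let $P=\langle(\mathcal Q,\le),N\rangle$ be a possibilistic disjunctive logic program and let $\alpha\in\mathcal Q$ be fixed. If $n(r)=\alpha$ for every $r\in N$ and $M'$ is an answer set of $P^*$, then $M:=\{(a,\alpha):a\in M'\}$ is a possibilistic answer set of $P$.
   Context: $(\mathcal Q,\le)$ is a finite lattice with top $\top_{\mathcal Q}$. A possibilistic disjunctive logic program is $P=\langle(\mathcal Q,\le),N\rangle$ with $N$ a finite set of possibilistic clauses $r=\beta:\mathcal A\leftarrow\mathcal B^+,not\ \mathcal B^-$ ($\beta\in\mathcal Q$; strongly negated atoms treated as fresh atoms) and constraints $\top_{\mathcal Q}:\ \leftarrow\mathcal B^+,not\ \mathcal B^-$. $n(r)=\beta$, $r^*$ the underlying clause, $P^*=\{r^*:r\in N\}$; answer sets of $P^*$ are Gelfond–Lifschitz answer sets (minimal models of the reduct), complementary atoms allowed. $\mathcal{PS}$: sets of pairs (atom, element of $\mathcal Q$) with each atom at most once; $M^*$ its set of atoms; $A\sqsubseteq B$ iff $A^*\subseteq B^*$ and $\gamma\le\delta$ whenever $(x,\gamma)\in A,(x,\delta)\in B$. Reduct $P_M=\{n(r):(\mathcal A\cap M)\leftarrow\mathcal B^+\mid r\in N,\mathcal A\cap M\ne\emptyset,\mathcal B^-\cap M=\emptyset,\mathcal B^+\subseteq M\}$. $\vdash_{PL}$ is necessity-valued possibilistic-logic inference (clauses read as weighted implications; classical axioms weighted $\top_{\mathcal Q}$; rules $(\varphi\ \gamma),(\varphi\to\psi\ \delta)\vdash(\psi\ \mathrm{GLB}\{\gamma,\delta\})$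 and $(\varphi\ \gamma),(\varphi\ \delta)\vdash(\varphi\ \epsilon)$ for $\epsilon\le\mathrm{GLB}\{\gamma,\delta\}$). $P\Vvdash_{PL}M$ iff $M^*$ is an answer set of $P^*$ and $P_{M^*}\vdash_{PL}(a\ \gamma)$ for all $(a,\gamma)\in M$. $M$ is a possibilistic answer set of $P$ iff $M^*$ is an answer set of $P^*$, $P\Vvdash_{PL}M$, and there is no $M''\in\mathcal{PS}$, $M''\ne M$, with $M\sqsubseteq M''$ and $P\Vvdash_{PL}M''$. *)

From Stdlib Require List.
From HB Require Import structures.
From mathcomp Require Import all_boot all_order.
Set Implicit Arguments. Unset Strict Implicit. Unset Printing Implicit Defensive.
Import Order.Theory.
Local Open Scope order_scope.

Section Defs.
Variable T : finType.   (* atoms (strongly negated atoms are just further atoms) *)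

Record clause := Clause { head : {set T}; pos : {set T}; neg : {set T} }.

(* constraint  <- B+, not B-   (first component B+, second B-) *)
Definition constr := ({set T} * {set T})%type.

Record dprog := DProg { drules : seq clause; dconstrs : seq constr }.

(* X is a model of the Gelfond-Lifschitz reduct P^M *)
Definition reduct_model (P : dprog) (M X : {set T}) : Prop :=
  (forall r, List.In r (drules P) -> [disjoint neg r & M] ->
       pos r \subset X -> head r :&: X != set0) /\
  (forall c, List.In c (dconstrs P) -> [disjoint c.2 & M] -> ~~ (c.1 \subset X)).

Definition answer_set (P : dprog) (M : {set T}) : Prop :=
  reduct_model P M M /\
  forall X : {set T}, X \subset M -> reduct_model P M X -> X = M.

Inductive formula :=
| Fvar of T | Ftop | Fbot | Fneg of formula
| Fand of formula & formula | For of formula & formula | Fimp of formula & formula.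

Fixpoint feval (v : T -> bool) (f : formula) : bool :=
  match f with
  | Fvar a => v a | Ftop => true | Fbot => false
  | Fneg g => ~~ feval v g
  | Fand g h => feval v g && feval v h
  | For g h => feval v g || feval v h
  | Fimp g h => feval v g ==> feval v h
  end.

Definition tautology (f : formula) : Prop := forall v, feval v f.

Definition bigAnd (s : seq T) : formula := foldr (fun a f => Fand (Fvar a) f) Ftop s.
Definition bigOr (s : seq T) : formula := foldr (fun a f => For (Fvar a) f) Fbot s.

Definition clause_formula (A B : {set T}) : formula :=
  Fimp (bigAnd (enum B)) (bigOr (enum A)).

Section Possibilistic.
Variables (d : Order.disp_t) (Q : finTBLatticeType d).

Record pprog := PProg { prules : seq (Q * clause); pconstrs : seq constr }.

Definition n (r : Q * clause) : Q := r.1.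

Definition star (P : pprog) : dprog := DProg [seq r.2 | r <- prules P] (pconstrs P).

Inductive pl_derives (G : seq (formula * Q)) : formula -> Q -> Prop :=
| pl_hyp phi g : List.In (phi, g) G -> pl_derives G phi g
| pl_ax phi : tautology phi -> pl_derives G phi \top
| pl_mp phi psi g e : pl_derives G phi g -> pl_derives G (Fimp phi psi) e ->
    pl_derives G psi (Order.meet g e)
| pl_weak phi g e eps : pl_derives G phi g -> pl_derives G phi e ->
    eps <= Order.meet g e -> pl_derives G phi eps.

Definition preduct (P : pprog) (M : {set T}) : seq (formula * Q) :=
  [seq (clause_formula (head r.2 :&: M) (pos r.2), n r)
  | r <- prules P & [&& head r.2 :&: M != set0, [disjoint neg r.2 & M]
                      & pos r.2 \subset M]].

(* possibilistic atom sets PS: each atom occurs at most once, i.e. a partial map *)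
Definition pset := {ffun T -> option Q}.

Definition pstar (M : pset) : {set T} := [set x | M x != None].

Definition psub (A B : pset) : Prop :=
  pstar A \subset pstar B /\
  forall x g e, A x = Some g -> B x = Some e -> g <= e.

Definition pl_entails (P : pprog) (M : pset) : Prop :=
  answer_set (star P) (pstar M) /\
  forall a g, M a = Some g -> pl_derives (preduct P (pstar M)) (Fvar a) g.

Definition poss_answer_set (P : pprog) (M : pset) : Prop :=
  answer_set (star P) (pstar M) /\ pl_entails P M /\
  ~ (exists M'' : pset, M'' <> M /\ psub M M'' /\ pl_entails P M'').

End Possibilistic.
End Defs.

(** Since all rules carry the same weight alpha, every clause of the
   possibilistic reduct has weight alpha.  Minimality of the answer set M'
   makes each atom of M' a classical consequence of the reduct, so chaining
   modus ponens through the reduct derives it with weight alpha.  Conversely,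
   a derivation from premises of weight alpha either has weight at most alpha
   or concludes a tautology, which a single atom is not; so no atom of M' can
   be given a larger weight, and no other answer set can lie above M'. *)

From Pilot Require Import Defs.
From Stdlib Require List.
From HB Require Import structures.
From mathcomp Require Import all_boot all_order.
Import Order.Theory.
Local Open Scope order_scope.
Set Implicit Arguments. Unset Strict Implicit.

Lemma In_filter (A : Type) (p : pred A) (s : seq A) x :
  List.In x (filter p s) <-> List.In x s /\ p x.
Proof.
elim: s => [|y s IH] /=; first by split=> [|[]].
case py: (p y) => /=; rewrite IH.
- by split=> [[<-|[]]|[[<-|]]]; auto.
- by split=> [[]|[[<-|]]]; auto; rewrite py.
Qed.

Lemma allInP (A : Type) (p : pred A) (s : seq A) :
  reflect (forall x, List.In x s -> p x) (all p s).
Proof.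
elim: s => [|y s IH] /=; first by constructor.
apply: (iffP andP) => [[py /IH Hs] x [<-|/Hs]|Hs] //.
by split; [apply: Hs; left | apply/IH => x Hx; apply: Hs; right].
Qed.

Section Development.
Variable T : finType.

Lemma feval_bigAnd v (s : seq T) : feval v (bigAnd s) = all v s.
Proof. by elim: s => //= x s ->. Qed.

Lemma feval_bigOr v (s : seq T) : feval v (bigOr s) = has v s.
Proof. by elim: s => //= x s ->. Qed.

Definition imps (hs : seq (formula T)) (phi : formula T) := foldr (@Fimp T) phi hs.

Lemma feval_imps v hs phi :
  feval v (imps hs phi) = all (feval v) hs ==> feval v phi.
Proof. by elim: hs => //= h hs ->; case: (feval v h). Qed.

Lemma answer_set_subset_eq (D : dprog T) A B :
  answer_set D A -> answer_set D B -> A \subset B -> A = B.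
Proof.
move=> [[HAr HAc] _] [_ HBmin] AB; apply: HBmin => //; split.
- by move=> r Hr Hd; apply: HAr => //; apply: disjointWr Hd.
- by move=> c Hc Hd; apply: HAc => //; apply: disjointWr Hd.
Qed.

Variables (d : Order.disp_t) (Q : finTBLatticeType d).
Implicit Types (G : seq (formula T * Q)) (P : pprog T Q).

Lemma pl_derives_imps G hs phi g e :
  (forall h, List.In h hs -> pl_derives G h e) -> e <= g ->
  pl_derives G (imps hs phi) g -> pl_derives G phi e.
Proof.
elim: hs g => [|h hs IH] g /= Hhs eg Hd.
  by apply: (pl_weak Hd Hd); rewrite meetxx.
apply: (IH (e `&` g)); first by move=> h' Hh'; apply: Hhs; right.
  by rewrite lexI lexx eg.
by apply: pl_mp Hd; apply: Hhs; left.
Qed.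

Lemma pl_derives_le_or_tautology G alpha phi g :
  (forall h, List.In h G -> h.2 <= alpha) ->
  pl_derives G phi g -> g <= alpha \/ tautology phi.
Proof.
move=> HG; elim=> {phi g}.
- by move=> phi g /HG; left.
- by right.
- move=> phi psi g e _ [ga|Hphi] _ [ea|Himp].
  + by left; apply: leIxl.
  + by left; apply: leIxl.
  + by left; apply: leIxr.
  + by right=> v; have := Himp v; rewrite /= Hphi.
- move=> phi g e eps _ [ga|Hphi] _ _ Heps; last by right.
  by left; apply: le_trans Heps (leIxl _ ga).
Qed.

Lemma preduct_weight P alpha M h :
  (forall r, List.In r (prules P) -> n r = alpha) ->
  List.In h (preduct P M) -> h.2 = alpha.
Proof.
by move=> Hn /List.in_map_iff [r [<- /In_filter [Hr _]]]; apply: Hn.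
Qed.

Lemma reduct_model_of_preduct P M v :
  reduct_model (star P) M M ->
  (forall h, List.In h (preduct P M) -> feval v h.1) ->
  reduct_model (star P) M (M :&: [set x | v x]).
Proof.
move=> [HMr HMc] Hv; have XM := @subsetIl _ M [set x | v x].
split=> [r0 Hr0 Hdis Hpos | c Hc Hdis]; last first.
  by apply: contraTN (HMc c Hc Hdis) => /subset_trans ->.
have [r [Er Hr]] := proj1 (List.in_map_iff _ _ _) Hr0; subst r0.
have posM := subset_trans Hpos XM.
have headM := HMr r.2 Hr0 Hdis posM.
have Hclause : List.In (clause_formula (Defs.head r.2 :&: M) (pos r.2), n r)
                       (preduct P M).
  by apply: List.in_map; apply/In_filter; rewrite headM Hdis posM.
have posv : all v (enum (pos r.2)).
  apply/allP=> x; rewrite mem_enum => /(subsetP Hpos).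
  by rewrite !inE => /andP [].
move: (Hv _ Hclause); rewrite /= feval_bigAnd feval_bigOr posv /=.
case/hasP=> x; rewrite mem_enum !inE => /andP [xh xM] vx.
by apply/set0Pn; exists x; rewrite !inE xh xM vx.
Qed.

Lemma answer_set_imps_preduct P M a :
  answer_set (star P) M -> a \in M ->
  tautology (imps [seq h.1 | h <- preduct P M] (Fvar a)).
Proof.
move=> [HM HMmin] aM v; rewrite feval_imps; apply/implyP=> /allInP Hv.
have Hmodel : reduct_model (star P) M (M :&: [set x | v x]).
  by apply: (reduct_model_of_preduct HM) => h Hh; apply/Hv/List.in_map.
have := HMmin _ (subsetIl _ _) Hmodel.
by move/setP/(_ a); rewrite !inE aM /= => ->.
Qed.

Definition uniform_pset (M : {set T}) (alpha : Q) : pset T Q :=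
  [ffun a => if a \in M then Some alpha else None].

Lemma pstar_uniform_pset M alpha : pstar (uniform_pset M alpha) = M.
Proof. by apply/setP=> a; rewrite inE ffunE; case: (a \in M). Qed.

Section UniformWeights.
Variables (P : pprog T Q) (alpha : Q) (M : {set T}).
Hypothesis rules_weight : forall r, List.In r (prules P) -> n r = alpha.
Hypothesis answerM : answer_set (star P) M.

Lemma pl_entails_uniform_pset : pl_entails P (uniform_pset M alpha).
Proof.
split; first by rewrite pstar_uniform_pset.
move=> a g; rewrite pstar_uniform_pset ffunE.
case: ifP => // aM [<-].
apply: (@pl_derives_imps _ [seq h.1 | h <- preduct P M] _ \top).
- move=> _ /List.in_map_iff [h [<- Hh]].
  by rewrite -(preduct_weight rules_weight Hh); apply: pl_hyp; case: h Hh.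
- exact: lex1.
- exact/pl_ax/answer_set_imps_preduct.
Qed.

Lemma pl_entails_uniform_pset_max M'' :
  psub (uniform_pset M alpha) M'' -> pl_entails P M'' ->
  M'' = uniform_pset M alpha.
Proof.
rewrite /psub pstar_uniform_pset => -[sub le_weight] [answerM'' derivM''].
have starM'' := answer_set_subset_eq answerM answerM'' sub.
have weightM'' h : List.In h (preduct P (pstar M'')) -> h.2 <= alpha.
  by rewrite -starM'' => /(preduct_weight rules_weight) ->.
apply/ffunP=> x; rewrite ffunE.
have /setP/(_ x) := starM''; rewrite inE.
case: (M'' x) (le_weight x) (derivM'' x) => [e|] le_e der_e xM; rewrite xM //=.
have alpha_le_e : alpha <= e by apply: (le_e _ _ _ erefl); rewrite ffunE xM.
have [e_le_alpha|taut] := pl_derives_le_or_tautology weightM'' (der_e e erefl).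
  by rewrite (@le_anti _ _ alpha e) ?alpha_le_e ?e_le_alpha.
by have := taut (fun _ => false).
Qed.

End UniformWeights.
End Development.

Theorem proposition4 (T : finType) (d : Order.disp_t) (Q : finTBLatticeType d)
    (P : pprog T Q) (alpha : Q) (M' : {set T}) :
  (forall r, List.In r (prules P) -> n r = alpha) ->
  answer_set (star P) M' ->
  poss_answer_set P [ffun a => if a \in M' then Some alpha else None].
Proof.
move=> rules_weight answerM'.
split; first by rewrite pstar_uniform_pset.
split; first exact: pl_entails_uniform_pset.
move=> [M'' [neq [sub entails]]].
exact/neq/(pl_entails_uniform_pset_max rules_weight answerM').
Qed.
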